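(* Let $\mathfrak{H}$ be a fat Hoffman graph with $\lambda_{\min}(\mathfrak{H})>-3$. Then $\lambda_{\min}(\mathcal{S}(\mathfrak{H}))\ge\lambda_{\min}(\mathfrak{H})+1$.
   Context: A Hoffman graph $\mathfrak{H}$ is a finite simple graph $H$ together with a labeling of each vertex as slim or fat, such that every fat vertex is adjacent to at least one slim vertex and the fat vertices are pairwise non-adjacent. $V^s(\mathfrak{H})$ denotes the set of slim vertices and $N^f_{\mathfrak{H}}(x)$ the set of fat neighbours of $x$. $\mathfrak{H}$ is fat if every slim vertex has at least one fat neighbour. Writing the adjacency matrix of $H$ with fat vertices last as $\begin{pmatrix}A_s & C\\ C^T & O\end{pmatrix}$, set $B(\mathfrak{H})=A_s-CC^T$; $\lambda_{\min}(\mathfrak{H})$ is the smallest eigenvalue of $B(\mathfrak{H})$. An edge-signed graph is a simple graph each of whose edges is labelled $+$ or $-$; its signed adjacency matrix $M(\mathcal{S})$ has entries $1$ for $(+)$-edges, $-1$ for $(-)$-edges, $0$ otherwise, and $\lambda_{\min}(\mathcal{S})$ is its smallest eigenvalue. The special graph $\mathcal{S}(\mathfrak{H})$ is the edge-signed graph with vertex set $V^s(\mathfrak{H})$ in which distinct $u,v$ are joined by a $(+)$-edge iff $u,v$ are adjacent in $\mathfrak{H}$ and have no common fat neighbour, by a $(-)$-edge iff $u,v$ are non-adjacent in $\mathfrak{H}$ and have a common fat neighbour, and are not joined otherwise. *)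

From HB Require Import structures.
From mathcomp Require Import all_boot all_order all_algebra.
Set Implicit Arguments. Unset Strict Implicit. Unset Printing Implicit Defensive.
Import Order.TTheory GRing.Theory Num.Theory.
Local Open Scope ring_scope.

(* A Hoffman graph with n slim vertices 'I_n and m fat vertices 'I_m.
   [adj] is the adjacency relation among slim vertices, [c i j] says slim
   vertex i is adjacent to fat vertex j.  Fat vertices are pairwise
   non-adjacent by construction of this representation. *)
Definition hoffman_graph (n m : nat) (adj : rel 'I_n) (c : 'I_n -> 'I_m -> bool) : Prop :=
  [/\ forall i, ~~ adj i i,
      forall i j, adj i j = adj j i &
      forall f : 'I_m, exists i : 'I_n, c i f].

Definition fat_hoffman_graph n m (adj : rel 'I_n) (c : 'I_n -> 'I_m -> bool) : Prop :=
  @hoffman_graph n m adj c /\ forall i : 'I_n, exists f : 'I_m, c i f.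

Definition slim_adj_mx (R : nzRingType) n (adj : rel 'I_n) : 'M[R]_n :=
  \matrix_(i, j) (adj i j)%:R.
Definition fat_inc_mx (R : nzRingType) n m (c : 'I_n -> 'I_m -> bool) : 'M[R]_(n, m) :=
  \matrix_(i, j) (c i j)%:R.
Definition hoffman_B (R : comNzRingType) n m (adj : rel 'I_n) (c : 'I_n -> 'I_m -> bool) : 'M[R]_n :=
  slim_adj_mx R adj - fat_inc_mx R c *m (fat_inc_mx R c)^T.

Definition common_fat n m (c : 'I_n -> 'I_m -> bool) (u v : 'I_n) : bool :=
  [exists f : 'I_m, c u f && c v f].

Definition special_signed_mx (R : nzRingType) n m (adj : rel 'I_n) (c : 'I_n -> 'I_m -> bool) : 'M[R]_n :=
  \matrix_(u, v)
    (if u == v then 0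
     else if adj u v && ~~ common_fat c u v then 1
     else if ~~ adj u v && common_fat c u v then -1
     else 0).

Definition is_min_eigenvalue (R : numFieldType) n (A : 'M[R]_n) (lam : R) : Prop :=
  eigenvalue A lam /\ forall mu, eigenvalue A mu -> lam <= mu.

From HB Require Import structures.
From mathcomp Require Import all_boot all_order all_algebra.
From mathcomp Require Import spectral sesquilinear complex.
From mathcomp Require Import ring lra.
Set Implicit Arguments. Unset Strict Implicit. Unset Printing Implicit Defensive.
Import Order.TTheory GRing.Theory Num.Theory.
Local Open Scope ring_scope.

(* Let B = A_s - C C^T and let M be the signed adjacency matrix of the special
   graph.  Write t(u,w) for the number of common fat neighbours of the slim
   vertices u, w, so that B u w = adj u w - t(u,w).
   1. Rayleigh bound: for a real symmetric matrix whose eigenvalues are all at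
      least lam, x B x^T >= lam * x x^T; we obtain it by complexifying B and
      using the unitary diagonalisation of normal matrices (spectral.v).
   2. Testing the bound at a unit vector gives lam <= B u u = -t(u,u), so
      lam > -3 forces every slim vertex to have at most 2 fat neighbours; by
      fatness it has at least one.
   3. Under these degree bounds, a case analysis on t(u,w) in {0,1,2} shows
      2 (M - B - I) = sum over ordered pairs f <> g of fat vertices of r r^T,
      where r is the indicator of the slim vertices adjacent to both f and g;
      in particular M - B - I is positive semidefinite.
   4. For an eigenvector v of M with eigenvalue mu,
      mu |v|^2 = v M v^T >= v B v^T + |v|^2 >= (lam + 1) |v|^2. *)


Definition qform (R : comNzRingType) n (A : 'M[R]_n) (v : 'rV[R]_n) : R :=
  (v *m A *m v^T) 0 0.

Section QuadraticForm.
Variables (R : comNzRingType) (n : nat).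
Implicit Types (A : 'M[R]_n) (v : 'rV[R]_n).

Lemma qformB A1 A2 v : qform (A1 - A2) v = qform A1 v - qform A2 v.
Proof. by rewrite /qform mulmxBr mulmxBl !mxE. Qed.

Lemma qformZ a A v : qform (a *: A) v = a * qform A v.
Proof. by rewrite /qform -scalemxAr -scalemxAl mxE. Qed.

Lemma qform_sum (I : finType) (A : I -> 'M[R]_n) v :
  qform (\sum_i A i) v = \sum_i qform (A i) v.
Proof. by rewrite /qform mulmx_sumr mulmx_suml summxE. Qed.

Lemma qform_delta A u : qform A (delta_mx 0 u) = A u u.
Proof. by rewrite /qform -rowE trmx_delta -colE !mxE. Qed.

Lemma qform_eigen A v mu : v *m A = mu *: v -> qform A v = mu * qform 1%:M v.
Proof. by move=> eig; rewrite /qform mulmx1 eig -scalemxAl mxE. Qed.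

End QuadraticForm.

Section QuadraticFormSign.
Variables (R : realDomainType) (n : nat).

Lemma qform_gram_ge0 (w v : 'rV[R]_n) : 0 <= qform (w^T *m w) v.
Proof.
rewrite /qform !mulmxA -(mulmxA (v *m w^T)) -[w *m v^T]trmxK trmx_mul trmxK.
by rewrite mxE big_ord1 [X in _ * X]mxE -expr2 sqr_ge0.
Qed.

Lemma qform_gram_sum_ge0 (I : finType) (a : I -> R) (w : I -> 'rV[R]_n) v :
  (forall i, 0 <= a i) -> 0 <= qform (\sum_i a i *: ((w i)^T *m w i)) v.
Proof.
move=> a_ge0; rewrite qform_sum; apply: sumr_ge0 => i _.
by rewrite qformZ mulr_ge0 ?qform_gram_ge0.
Qed.

Lemma qform1_gt0 (v : 'rV[R]_n) : v != 0 -> 0 < qform 1%:M v.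
Proof.
move=> v0; rewrite /qform mulmx1 mxE.
have sq_ge0 j : 0 <= v 0 j * v^T j 0 by rewrite mxE -expr2 sqr_ge0.
rewrite lt_def sumr_ge0 ?andbT; last by move=> j _; apply: sq_ge0.
rewrite psumr_eq0; last by move=> j _; apply: sq_ge0.
apply: contra v0 => /allP v_sq0; apply/eqP/rowP => j.
by have := v_sq0 j (mem_index_enum j); rewrite /= mxE mulf_eq0 orbb => /eqP ->; rewrite mxE.
Qed.

End QuadraticFormSign.

Section SpectralBound.
Local Open Scope sesquilinear_scope.
Variable R : rcfType.
Local Notation C := (R[i] : numClosedFieldType).
Local Notation toC := (real_complex R).

Lemma conj_real_complex (a : R) : (toC a)^* = toC a.
Proof.
apply/conj_Creal; rewrite realE.
by have := num_real a; rewrite realE -(rmorph0 toC) !lecR.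
Qed.

Lemma Creal_real_complex (z : C) : z \is Num.real -> z = toC (complex.Re z).
Proof.
by rewrite realE !lecE; case: z => a b /= /orP[]/andP[/eqP b0 _]; [rewrite b0 | rewrite -b0].
Qed.

(* The diagonal of the unitary diagonalisation of a normal matrix consists
   of eigenvalues: the rows of the unitary matrix are eigenvectors. *)
Lemma spectral_diag_eigenvalue n (A : 'M[C]_n) j :
  A \is normalmx -> eigenvalue A (spectral_diag A 0 j).
Proof.
move=> /orthomx_spectralP eqA.
set P := spectralmx A in eqA; set d := spectral_diag A in eqA *.
have PU : P \is unitarymx := spectral_unitarymx A.
apply/eigenvalueP; exists (row j P).
  rewrite -row_mul; have -> : P *m A = diag_mx d *m P.
    by rewrite [in LHS]eqA !mulmxA mulmxV ?spectral_unit // mul1mx.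
  by rewrite mul_diag_mx; apply/rowP => k; rewrite !mxE.
apply/eqP => row0.
have : (row j P *m P^t*) 0 j = 1 by rewrite -row_mul mxE (unitarymxP PU) mxE eqxx.
by rewrite row0 mul0mx mxE => /eqP; rewrite eq_sym oner_eq0.
Qed.

Lemma complexify_hermsym n (B : 'M[R]_n) :
  B^T = B -> map_mx toC B \is hermsymmx.
Proof.
move=> symB; apply: realsym_hermsym.
  apply/is_hermitianmxP; rewrite expr0 scale1r map_mx_id //.
  by rewrite map_trmx symB.
by apply/mxOverP => i j; rewrite mxE; apply/CrealP; rewrite conj_real_complex.
Qed.

(* The diagonalised complexification of a real symmetric matrix has real
   diagonal entries, which are eigenvalues of the real matrix, hence are
   bounded below by any lower bound of its real eigenvalues. *)
Lemma realsym_spectral_diag_ge n (B : 'M[R]_n) (lam : R) : B^T = B ->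
  (forall mu, eigenvalue B mu -> lam <= mu) ->
  forall j, toC lam <= spectral_diag (map_mx toC B) 0 j.
Proof.
move=> symB lam_min j; have hermB := complexify_hermsym symB.
have dreal := mxOverP (hermitian_spectral_diag_real hermB) 0 j.
set d := spectral_diag _ 0 j in dreal *.
rewrite (Creal_real_complex dreal) lecR; apply: lam_min.
have := spectral_diag_eigenvalue j (hermitian_normalmx hermB).
rewrite -/d (Creal_real_complex dreal) !eigenvalue_root_char.
by rewrite -map_char_poly fmorph_root.
Qed.

(* Rayleigh bound: in the eigenbasis, x B x^T is a convex-type combination
   sum_j d_j |y_j|^2 with all d_j >= lam and sum_j |y_j|^2 = |x|^2. *)
Lemma rayleigh n (B : 'M[R]_n) (lam : R) : B^T = B ->
  (forall mu, eigenvalue B mu -> lam <= mu) ->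
  forall x : 'rV[R]_n, lam * qform 1%:M x <= qform B x.
Proof.
move=> symB lam_min x.
have /orthomx_spectralP eqB := hermitian_normalmx (complexify_hermsym symB).
set Bc := map_mx toC B in eqB *.
set P := spectralmx Bc in eqB; set d := spectral_diag Bc in eqB.
have PU : P \is unitarymx := spectral_unitarymx Bc.
pose xc := map_mx toC x; pose y := xc *m P^t*.
have xcT : xc^t* = map_mx toC x^T.
  by apply/matrixP => i j; rewrite !mxE conj_real_complex.
have yT : y^t* = P *m xc^t* by rewrite /y trmx_mul map_mxM trmxCK.
have qB : toC (qform B x) = (y *m diag_mx d *m y^t*) 0 0.
  have -> : y *m diag_mx d *m y^t* = xc *m Bc *m xc^t*.
    by rewrite yT eqB invmx_unitary // /y !mulmxA.
  by rewrite xcT -!map_mxM [in RHS]mxE.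
have q1 : toC (qform 1%:M x) = (y *m y^t*) 0 0.
  have -> : y *m y^t* = xc *m xc^t*.
    have PtP : P^t* *m P = 1%:M by rewrite -invmx_unitary // mulVmx ?spectral_unit.
    by rewrite yT /y mulmxA -(mulmxA xc) PtP mulmx1.
  by rewrite /qform mulmx1 xcT -map_mxM [in RHS]mxE.
have toCM : toC (lam * qform 1%:M x) = toC lam * toC (qform 1%:M x).
  exact: rmorphM.
clearbody y; rewrite -lecR toCM qB q1 !mxE mulr_sumr; apply: ler_sum => j _.
rewrite mul_mx_diag !mxE [y 0 j * d 0 j]mulrC -mulrA ler_wpM2r ?mul_conjC_ge0 //.
exact: realsym_spectral_diag_ge.
Qed.

End SpectralBound.

Section HoffmanMatrices.
Variables (R : comNzRingType) (n m : nat).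
Variables (adj : rel 'I_n) (c : 'I_n -> 'I_m -> bool).

Definition common_fat_count (u w : 'I_n) : nat := (\sum_f (c u f && c w f))%N.

Lemma hoffman_BE u w :
  hoffman_B R adj c u w = (adj u w)%:R - (common_fat_count u w)%:R.
Proof.
rewrite /hoffman_B !mxE natr_sum; congr (_ - _); apply: eq_bigr => f _.
by rewrite !mxE -natrM mulnb.
Qed.

Lemma common_fat_countC u w : common_fat_count u w = common_fat_count w u.
Proof. by apply: eq_bigr => f _; rewrite andbC. Qed.

Lemma hoffman_B_sym : (forall u w, adj u w = adj w u) ->
  (hoffman_B R adj c)^T = hoffman_B R adj c.
Proof.
by move=> adjC; apply/matrixP => u w; rewrite mxE !hoffman_BE adjC common_fat_countC.
Qed.

Lemma common_fatE u w : common_fat c u w = (0 < common_fat_count u w)%N.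
Proof.
rewrite lt0n sum_nat_eq0 negb_forall; apply: eq_existsb => f.
by case: (c u f && c w f).
Qed.

Lemma common_fat_count_le u w : (common_fat_count u w <= common_fat_count u u)%N.
Proof. by apply: leq_sum => f _; rewrite andbb; case: (c u f); case: (c w f). Qed.

Definition fat_pair_row (f g : 'I_m) : 'rV[R]_n := \row_u (c u f && c u g)%:R.

Definition fat_pair_gram : 'M[R]_n :=
  \sum_f \sum_g (f != g)%:R *: ((fat_pair_row f g)^T *m fat_pair_row f g).

(* Entry (u, w) counts ordered pairs of distinct common fat neighbours. *)
Lemma fat_pair_gramE u w : let t := (common_fat_count u w)%:R in
  fat_pair_gram u w = t * t - t.
Proof.
have bb (x : bool) : x%:R * x%:R = x%:R :> R by case: x; rewrite ?mulr0 ?mulr1.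
rewrite /= /common_fat_count natr_sum mulr_suml -sumrB summxE.
apply: eq_bigr => f _; rewrite summxE (bigD1 f) //= eqxx scale0r mxE add0r.
rewrite mulr_sumr [in RHS](bigD1 f) //= bb addrAC subrr add0r.
apply: eq_bigr => g neq_gf.
rewrite eq_sym neq_gf scale1r !mxE big_ord1 !mxE.
by case: (c u f); case: (c u g); case: (c w f); case: (c w g); rewrite /= ?mulr0 ?mul0r ?mulr1.
Qed.

(* When every fat degree is 1 or 2, 2 (M - B - I) is exactly this sum of Gram
   matrices; both sides are compared entrywise for t(u, w) in {0, 1, 2}. *)
Lemma special_signed_decomp : (forall u, ~~ adj u u) ->
  (forall u, 0 < common_fat_count u u <= 2)%N ->
  2 *: (special_signed_mx R adj c - hoffman_B R adj c - 1%:M) = fat_pair_gram.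
Proof.
move=> adj_irr fat_deg; apply/matrixP => u w.
rewrite fat_pair_gramE /= 3!mxE [(- hoffman_B _ _ _) u w]mxE hoffman_BE !mxE common_fatE.
have /andP[deg_gt0 deg_le2] := fat_deg u.
case: eqVneq => [<-|_] /=.
  rewrite (negbTE (adj_irr u)).
  by move: deg_gt0 deg_le2; case: (common_fat_count u u) => [|[|[|k]]] //= _ _; ring.
move: (leq_trans (common_fat_count_le u w) deg_le2).
by case: (common_fat_count u w) => [|[|[|k]]] //= _; case: (adj u w) => /=; ring.
Qed.

End HoffmanMatrices.

(* Consequently M - B - I is positive semidefinite. *)
Lemma fat_pair_gram_psd (R : realDomainType) n m (c : 'I_n -> 'I_m -> bool)
    (v : 'rV[R]_n) :
  0 <= qform (fat_pair_gram R c) v.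
Proof. by rewrite /fat_pair_gram pair_bigA qform_gram_sum_ge0. Qed.

Lemma special_signed_qform_ge (R : realDomainType) n m (adj : rel 'I_n)
    (c : 'I_n -> 'I_m -> bool) (v : 'rV[R]_n) :
  (forall u, ~~ adj u u) -> (forall u, 0 < common_fat_count c u u <= 2)%N ->
  qform (hoffman_B R adj c) v + qform 1%:M v <= qform (special_signed_mx R adj c) v.
Proof.
move=> adj_irr fat_deg; have := fat_pair_gram_psd c v.
rewrite -(special_signed_decomp _ adj_irr fat_deg) qformZ pmulr_rge0 // !qformB.
by rewrite subr_ge0 lerBrDl addrC.
Qed.

(* The Rayleigh bound at a unit vector gives lam <= -t(u, u), so lam > -3
   bounds all fat degrees by 2. *)
Lemma fat_degree_le2 (R : rcfType) n m (adj : rel 'I_n)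
    (c : 'I_n -> 'I_m -> bool) (lam : R) :
  (forall u w, adj u w = adj w u) -> (forall u, ~~ adj u u) ->
  (forall mu, eigenvalue (hoffman_B R adj c) mu -> lam <= mu) -> -3 < lam ->
  forall u, (common_fat_count c u u <= 2)%N.
Proof.
move=> adjC adj_irr lam_min lam_gt u.
have := rayleigh (hoffman_B_sym _ c adjC) lam_min (delta_mx 0 u).
rewrite !qform_delta hoffman_BE mxE eqxx (negbTE (adj_irr u)) mulr1 sub0r => lam_le.
by rewrite -ltnS -(ltr_nat R); lra.
Qed.

Theorem mainTheorem4 (R : rcfType) (n m : nat) (adj : rel 'I_n)
    (c : 'I_n -> 'I_m -> bool) (lam : R) :
  fat_hoffman_graph adj c ->
  is_min_eigenvalue (hoffman_B R adj c) lam ->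
  -3 < lam ->
  forall mu : R, eigenvalue (special_signed_mx R adj c) mu -> lam + 1 <= mu.
Proof.
move=> [[adj_irr adjC _] fat] [_ lam_min] lam_gt mu /eigenvalueP [v eig v0].
have fat_deg u : (0 < common_fat_count c u u <= 2)%N.
  rewrite (fat_degree_le2 adjC adj_irr lam_min lam_gt) andbT.
  by have [f cuf] := fat u; rewrite /common_fat_count (bigD1 f) //= andbb cuf.
have q1_gt0 := qform1_gt0 v0.
have := special_signed_qform_ge v adj_irr fat_deg; rewrite (qform_eigen eig) => sM.
have rB := rayleigh (hoffman_B_sym _ c adjC) lam_min v.
by rewrite -(ler_pM2r q1_gt0) mulrDl mul1r; lra.
Qed.
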